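(* Let $(\Omega,\Sigma,\mu)$ be a measure space with $\mu$ a positive countably additive measure, let $\rho:\Omega\to[0,\infty)$ be measurable, and let $f,g_1,\dots,g_n,h$ be real-valued measurable functions on $\Omega$ with $\int_\Omega\rho|u|^2\,d\mu<\infty$ for each $u\in\{f,g_1,\dots,g_n,h\}$. Writing $\int_\Omega\rho uv\,d\mu$ for $\int_\Omega\rho(s)u(s)v(s)\,d\mu(s)$, we have \[ \sum_{i=1}^n\begin{vmatrix}\int_\Omega\rho fg_i\,d\mu & \int_\Omega\rho fh\,d\mu\\ \int_\Omega\rho g_ih\,d\mu & \int_\Omega\rho h^2\,d\mu\end{vmatrix}^2 \le \begin{vmatrix}\int_\Omega\rho f^2\,d\mu & \int_\Omega\rho fh\,d\mu\\ \int_\Omega\rho fh\,d\mu & \int_\Omega\rho h^2\,d\mu\end{vmatrix} \times\left\{\max_{1\le i\le n}\begin{vmatrix}\int_\Omega\rho g_i^2\,d\mu & \int_\Omega\rho g_ih\,d\mu\\ \int_\Omega\rho g_ih\,d\mu & \int_\Omega\rho h^2\,d\mu\end{vmatrix} +(n-1)\max_{1\le i\ne j\le n}\left|\begin{vmatrix}\int_\Omega\rho g_jg_i\,d\mu & \int_\Omega\rho g_jh\,d\mu\\ \int_\Omega\rho g_ih\,d\mu & \int_\Omega\rho h^2\,d\mu\end{vmatrix}\right|\right\}. \]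
   Context: $\begin{vmatrix}a&b\\c&d\end{vmatrix}=ad-bc$ denotes a $2\times2$ determinant. The maximum over $1\le i\ne j\le n$ is over all pairs $(i,j)$ with $i\ne j$. *)

From HB Require Import structures.
From mathcomp Require Import all_boot all_order all_algebra.
From mathcomp Require Import all_classical all_reals all_analysis.
Set Implicit Arguments. Unset Strict Implicit. Unset Printing Implicit Defensive.
Import Order.TTheory GRing.Theory Num.Theory.
Local Open Scope ring_scope.

Definition wip (d : measure_display) (T : measurableType d) (R : realType)
  (mu : {measure set T -> \bar R}) (rho u v : T -> R) : R :=
  \int[mu]_(x in [set: T]) (rho x * u x * v x).

Definition det2 (R : ringType) (a b c d : R) : R := a * d - b * c.

From HB Require Import structures.
From mathcomp Require Import all_boot all_order all_algebra.
From mathcomp Require Import all_classical all_reals all_analysis.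
From mathcomp Require Import ring lra measurable_realfun.
Set Implicit Arguments. Unset Strict Implicit. Unset Printing Implicit Defensive.
Import Order.TTheory GRing.Theory Num.Theory.
Local Open Scope ring_scope.

(* The weighted inner products of f, h, g_1, ..., g_n form a
   positive semidefinite Gram matrix M, and so does its Schur complement
   B k l = M k l * M h h - M k h * M l h at h, whose entries are the 2x2
   determinants of the statement.  Put c_i = B f g_i and b = sum_i c_i e_{g_i}.
   Cauchy-Schwarz for B gives (sum_i c_i^2)^2 = B(e_f, b)^2 <= B f f * B(b, b),
   and since every column sum of |B g_j g_i| is at most the largest diagonal
   entry plus (n - 1) times the largest off-diagonal one, a Schur-test estimate
   gives B(b, b) <= K * sum_i c_i^2 for the bracketed factor K. *)

Section BilinearForms.
Variable R : realFieldType.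

Lemma discriminant_le0 (A C H : R) : 0 <= H ->
  (forall t, 0 <= A + 2 * t * C + t ^+ 2 * H) -> C ^+ 2 <= A * H.
Proof.
rewrite le_eqVlt => /predU1P[<- q_ge0 | H_gt0 q_ge0].
  have [-> | C_neq0] := eqVneq C 0; first by rewrite expr0n mulr0.
  have := q_ge0 (- (A + 1) / (2 * C)).
  have -> : A + 2 * (- (A + 1) / (2 * C)) * C + (- (A + 1) / (2 * C)) ^+ 2 * 0 = -1.
    by field.
  by rewrite oppr_ge0 ler10.
have := q_ge0 (- C / H); rewrite -(pmulr_rge0 _ H_gt0).
have -> : H * (A + 2 * (- C / H) * C + (- C / H) ^+ 2 * H) = A * H - C ^+ 2.
  by field; rewrite gt_eqF.
by rewrite subr_ge0.
Qed.

Section OneIndexType.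
Variable J : finType.
Implicit Types (M : J -> J -> R) (a b : J -> R).

Definition bform M a b : R := \sum_k \sum_l a k * b l * M k l.

Definition is_sym M := forall k l, M k l = M l k.

Definition is_psd M := forall a, 0 <= bform M a a.

Definition unit_vec (j : J) : J -> R := fun k => (k == j)%:R.

Lemma bformDl M a a' t b :
  bform M (fun k => a k + t * a' k) b = bform M a b + t * bform M a' b.
Proof.
rewrite /bform mulr_sumr -big_split /=; apply: eq_bigr => k _.
by rewrite mulr_sumr -big_split /=; apply: eq_bigr => l _; ring.
Qed.

Lemma bformDr M a b b' t :
  bform M a (fun l => b l + t * b' l) = bform M a b + t * bform M a b'.
Proof.
rewrite /bform mulr_sumr -big_split /=; apply: eq_bigr => k _.
by rewrite mulr_sumr -big_split /=; apply: eq_bigr => l _; ring.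
Qed.

Lemma bformC M a b : is_sym M -> bform M a b = bform M b a.
Proof.
move=> Msym; rewrite /bform exchange_big; apply: eq_bigr => l _.
by apply: eq_bigr => k _; rewrite Msym; ring.
Qed.

Lemma bform_CauchySchwarz M a b : is_sym M -> is_psd M ->
  bform M a b ^+ 2 <= bform M a a * bform M b b.
Proof.
move=> Msym Mpsd; apply: discriminant_le0 => [|t]; first exact: Mpsd.
have := Mpsd (fun k => a k + t * b k).
by rewrite bformDl !bformDr (bformC b a Msym); lra.
Qed.

Lemma sum_unit_vec j (X : J -> R) : \sum_k unit_vec j k * X k = X j.
Proof.
rewrite (bigD1 j) //= /unit_vec eqxx mul1r big1 ?addr0 // => k /negbTE->.
by rewrite mul0r.
Qed.

Lemma bform_unit_vecl M j b : bform M (unit_vec j) b = \sum_l b l * M j l.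
Proof.
rewrite /bform (eq_bigr (fun k => unit_vec j k * \sum_l b l * M k l)).
  by rewrite sum_unit_vec.
by move=> k _; rewrite mulr_sumr; apply: eq_bigr => l _; ring.
Qed.

Lemma bform_unit_vecr M a j : bform M a (unit_vec j) = \sum_k a k * M k j.
Proof.
apply: eq_bigr => k _.
rewrite (eq_bigr (fun l => unit_vec j l * (a k * M k l))) ?sum_unit_vec //.
by move=> l _; ring.
Qed.

Lemma bform_unit_vec M j k : bform M (unit_vec j) (unit_vec k) = M j k.
Proof. by rewrite bform_unit_vecl sum_unit_vec. Qed.

Lemma psd_diag_ge0 M j : is_psd M -> 0 <= M j j.
Proof. by move=> Mpsd; rewrite -bform_unit_vec. Qed.

Definition schur M j : J -> J -> R := fun k l => M k l * M j j - M k j * M l j.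

Lemma schur_sym M j : is_sym M -> is_sym (schur M j).
Proof. by move=> Msym k l; rewrite /schur Msym [M k j * _]mulrC. Qed.

Lemma bform_schur M j a b : bform (schur M j) a b =
  M j j * bform M a b - bform M a (unit_vec j) * bform M b (unit_vec j).
Proof.
rewrite !bform_unit_vecr /bform mulr_suml mulr_sumr -sumrB.
apply: eq_bigr => k _; rewrite !mulr_sumr -sumrB.
by apply: eq_bigr => l _; rewrite /schur; ring.
Qed.

Lemma schur_psd M j : is_sym M -> is_psd M -> is_psd (schur M j).
Proof.
move=> Msym Mpsd a; rewrite bform_schur -expr2 subr_ge0 mulrC.
by rewrite -[M j j]bform_unit_vec bform_CauchySchwarz.
Qed.

Lemma mul2_le_sqrD_norm (x y z : R) : 2 * (x * y * z) <= (x ^+ 2 + y ^+ 2) * `|z|.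
Proof.
have := ler_norm (x * y * z); rewrite !normrM.
have := sqr_ge0 (`|x| - `|y|); rewrite -(real_normK (num_real x)).
rewrite -(real_normK (num_real y)).
have := normr_ge0 z; nra.
Qed.

Lemma bform_le_col_sum M c K : is_sym M ->
  (forall i, \sum_j `|M j i| <= K) -> bform M c c <= K * \sum_i c i ^+ 2.
Proof.
move=> Msym colK.
set Y := \sum_i c i ^+ 2 * \sum_j `|M j i|.
have rows : \sum_k \sum_l c k ^+ 2 * `|M k l| = Y.
  by apply: eq_bigr => k _; rewrite mulr_sumr; apply: eq_bigr => l _; rewrite Msym.
have cols : \sum_k \sum_l c l ^+ 2 * `|M k l| = Y.
  by rewrite exchange_big; apply: eq_bigr => l _; rewrite mulr_sumr.
have twice : 2 * bform M c c <= Y + Y.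
  rewrite -{1}rows -cols /bform mulr_sumr -big_split /=; apply: ler_sum => k _.
  rewrite mulr_sumr -big_split /=; apply: ler_sum => l _.
  by rewrite -mulrDl mul2_le_sqrD_norm.
have : Y <= K * \sum_i c i ^+ 2.
  rewrite mulr_sumr; apply: ler_sum => i _; rewrite mulrC.
  by apply: ler_wpM2r; [exact: sqr_ge0 | exact: colK].
lra.
Qed.

End OneIndexType.

Section Pushforward.
Variables (I J : finType) (g : I -> J).

Definition push (c : I -> R) : J -> R := fun k => \sum_i c i * unit_vec (g i) k.

Lemma sum_push (c : I -> R) (X : J -> R) :
  \sum_k push c k * X k = \sum_i c i * X (g i).
Proof.
rewrite /push; under eq_bigr do rewrite mulr_suml.
rewrite exchange_big; apply: eq_bigr => i _.
rewrite (eq_bigr (fun k => c i * (unit_vec (g i) k * X k))); last by move=> k _; ring.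
by rewrite -mulr_sumr sum_unit_vec.
Qed.

Lemma bform_push (M : J -> J -> R) (c c' : I -> R) :
  bform M (push c) (push c') = bform (fun i j => M (g i) (g j)) c c'.
Proof.
rewrite /bform (eq_bigr (fun k => push c k * \sum_l push c' l * M k l)).
  rewrite sum_push; apply: eq_bigr => i _.
  by rewrite sum_push mulr_sumr; apply: eq_bigr => j _; ring.
by move=> k _; rewrite mulr_sumr; apply: eq_bigr => l _; ring.
Qed.

End Pushforward.

Lemma sum_sqr_le_of_col_sum (J : finType) (B : J -> J -> R) n (f : J) (g : 'I_n -> J) K :
  is_sym B -> is_psd B -> 0 <= K ->
  (forall i, \sum_j `|B (g j) (g i)| <= K) ->
  \sum_i B f (g i) ^+ 2 <= B f f * K.
Proof.
move=> Bsym Bpsd K_ge0 colK.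
pose c i := B f (g i); set S := \sum_i _.
have S_ge0 : 0 <= S by apply: sumr_ge0 => i _; exact: sqr_ge0.
have Bff_ge0 : 0 <= B f f by exact: psd_diag_ge0.
have fb : bform B (unit_vec f) (push g c) = S.
  by rewrite bform_unit_vecl sum_push; apply: eq_bigr => i _; rewrite expr2.
have bb : bform B (push g c) (push g c) <= K * S.
  by rewrite bform_push; apply: bform_le_col_sum => // i j; exact: Bsym.
have := bform_CauchySchwarz (unit_vec f) (push g c) Bsym Bpsd.
rewrite fb bform_unit_vec => CS.
have SS : S * S <= S * (B f f * K).
  by rewrite -expr2 (mulrC S) -mulrA; apply: le_trans CS _; exact: ler_wpM2l.
have [-> | S_neq0] := eqVneq S 0; first exact: mulr_ge0.
by rewrite -(@ler_pM2l _ S) // lt_def S_neq0.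
Qed.

Definition diag_offdiag_bound n (A : 'I_n -> 'I_n -> R) : R :=
  \big[Num.max/0]_(i < n) A i i
  + (n%:R - 1) * \big[Num.max/0]_(i < n) \big[Num.max/0]_(j < n | j != i) `|A j i|.

Lemma diag_offdiag_bound_ge0 n (A : 'I_n -> 'I_n -> R) : 0 <= diag_offdiag_bound A.
Proof.
rewrite /diag_offdiag_bound addr_ge0 ?bigmax_ge_id //.
case: n A => [|n] A; first by rewrite big_ord0 mulr0.
by rewrite mulr_ge0 ?bigmax_ge_id // subr_ge0 ler1n.
Qed.

Lemma col_sum_le_diag_offdiag_bound n (A : 'I_n -> 'I_n -> R) i :
  0 <= A i i -> \sum_j `|A j i| <= diag_offdiag_bound A.
Proof.
move=> Aii_ge0; rewrite (bigD1 i) //= ger0_norm //; apply: lerD.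
  exact: le_bigmax.
set offmax := \big[Num.max/0]_(i < n) _.
apply: (@le_trans _ _ (\sum_(j < n | j != i) offmax)).
  apply: ler_sum => j ji; apply: le_trans (le_bigmax _ _ i).
  exact: (le_bigmax_cond _ (fun j => `|A j i|)).
rewrite sumr_const cardC1 card_ord -[offmax *+ _]mulr_natl.
have n_gt0 : (0 < n)%N := leq_ltn_trans (leq0n i) (ltn_ord i).
by rewrite -subn1 natrB.
Qed.

End BilinearForms.

Section WeightedL2.
Context d (T : measurableType d) (R : realType) (mu : {measure set T -> \bar R}).
Variable rho : T -> R.
Hypotheses (rho_meas : measurable_fun setT rho) (rho_ge0 : forall x, 0 <= rho x).

Definition weighted_L2 (u : T -> R) := measurable_fun setT u /\
  (\int[mu]_(x in [set: T]) (rho x * `|u x| ^+ 2)%:E < +oo)%E.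

Lemma integrable_weighted_sqr u : weighted_L2 u ->
  mu.-integrable setT (EFin \o (fun x => rho x * `|u x| ^+ 2)).
Proof.
move=> [u_meas u_fin]; apply/integrableP; split.
  apply/measurable_EFinP; apply: measurable_funM => //.
  exact/measurable_funX/measurableT_comp.
rewrite (eq_integral (fun x => (rho x * `|u x| ^+ 2)%:E)) // => x _.
by rewrite gee0_abs // lee_fin mulr_ge0 // sqr_ge0.
Qed.

Lemma integrable_weighted_mul u v : weighted_L2 u -> weighted_L2 v ->
  mu.-integrable setT (EFin \o (fun x => rho x * u x * v x)).
Proof.
move=> uL2 vL2.
have int_sum : mu.-integrable setT
    (EFin \o (fun x => rho x * `|u x| ^+ 2 + rho x * `|v x| ^+ 2)).
  apply: (eq_integrable measurableT _ _ _ (integrableD measurableT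
    (integrable_weighted_sqr uL2) (integrable_weighted_sqr vL2))) => //.
apply: (le_integrable measurableT _ _ int_sum).
  apply/measurable_EFinP; apply: measurable_funM vL2.1.
  exact: measurable_funM uL2.1.
move=> x _; rewrite /= lee_fin !normrM (ger0_norm (rho_ge0 x)).
rewrite [X in _ <= X]ger0_norm ?addr_ge0 ?mulr_ge0 ?sqr_ge0 //.
rewrite -mulrA -mulrDr ler_wpM2l //.
have := sqr_ge0 (`|u x| - `|v x|); nra.
Qed.

Lemma integrable_Rsum (I : Type) (s : seq I) (F : I -> T -> R) :
  (forall i, mu.-integrable setT (EFin \o F i)) ->
  mu.-integrable setT (EFin \o (fun x => \sum_(i <- s) F i x)).
Proof.
move=> intF; apply: (eq_integrable measurableT _ _ _
  (integrable_sum measurableT s (fun i _ => intF i))).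
by move=> x _; rewrite /= sumEFin.
Qed.

Lemma Rintegral_sum (I : Type) (s : seq I) (F : I -> T -> R) :
  (forall i, mu.-integrable setT (EFin \o F i)) ->
  \int[mu]_(x in [set: T]) (\sum_(i <- s) F i x) =
  \sum_(i <- s) \int[mu]_(x in [set: T]) F i x.
Proof.
move=> intF; elim: s => [|i s IH].
  under eq_Rintegral do rewrite big_nil.
  by rewrite big_nil Rintegral_cst // mul0r.
rewrite big_cons -IH -RintegralD //; last exact: integrable_Rsum.
by apply: eq_Rintegral => x _; rewrite big_cons.
Qed.

Lemma wipC u v : wip mu rho u v = wip mu rho v u.
Proof. by apply: eq_Rintegral => x _; rewrite mulrAC. Qed.

Lemma wip_gram_psd (J : finType) (v : J -> T -> R) : (forall j, weighted_L2 (v j)) ->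
  is_psd (fun k l => wip mu rho (v k) (v l)).
Proof.
move=> vL2 a; pose u x := \sum_k a k * v k x.
have int_kl k l :
    mu.-integrable setT (EFin \o (fun x => a k * a l * (rho x * v k x * v l x))).
  apply: (eq_integrable measurableT _ _ _
    (integrableZl measurableT (a k * a l) (integrable_weighted_mul (vL2 k) (vL2 l)))).
  by move=> x _; rewrite /= EFinM.
have -> : bform (fun k l => wip mu rho (v k) (v l)) a a = wip mu rho u u.
  rewrite /wip (@eq_Rintegral _ _ _ mu _
    (fun x => \sum_k \sum_l a k * a l * (rho x * v k x * v l x))); last first.
    move=> x _; rewrite /u mulr_sumr [RHS]exchange_big; apply: eq_bigr => l _.
    by rewrite mulr_sumr mulr_suml; apply: eq_bigr => k _; ring.
  rewrite Rintegral_sum => [|k]; last exact: integrable_Rsum.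
  apply: eq_bigr => k _; rewrite Rintegral_sum //; apply: eq_bigr => l _.
  by rewrite RintegralZl // integrable_weighted_mul.
by apply: Rintegral_ge0 => x _; rewrite -mulrA mulr_ge0 // -expr2 sqr_ge0.
Qed.

End WeightedL2.

Theorem proposition5p2 (d : measure_display) (T : measurableType d) (R : realType)
  (mu : {measure set T -> \bar R}) (n : nat)
  (rho f h : T -> R) (g : 'I_n -> T -> R)
  (rho_meas : measurable_fun [set: T] rho)
  (rho_ge0 : forall x, 0 <= rho x)
  (f_meas : measurable_fun [set: T] f)
  (g_meas : forall i, measurable_fun [set: T] (g i))
  (h_meas : measurable_fun [set: T] h)
  (f_L2 : (\int[mu]_(x in [set: T]) (rho x * `|f x| ^+ 2)%:E < +oo)%E)
  (g_L2 : forall i, (\int[mu]_(x in [set: T]) (rho x * `|g i x| ^+ 2)%:E < +oo)%E)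
  (h_L2 : (\int[mu]_(x in [set: T]) (rho x * `|h x| ^+ 2)%:E < +oo)%E) :
  let I := wip mu rho in
  \sum_(i < n) (det2 (I f (g i)) (I f h) (I (g i) h) (I h h)) ^+ 2
  <= det2 (I f f) (I f h) (I f h) (I h h) *
     (\big[Num.max/0]_(i < n) det2 (I (g i) (g i)) (I (g i) h) (I (g i) h) (I h h)
      + (n%:R - 1) *
        \big[Num.max/0]_(i < n) \big[Num.max/0]_(j < n | j != i)
           `| det2 (I (g j) (g i)) (I (g j) h) (I (g i) h) (I h h) |).
Proof.
(* The Gram matrix of f, h, g_1, ..., g_n, indexed by None, Some None and
   Some (Some i): every determinant in the statement is an entry of its Schur
   complement at h. *)
pose v (k : option (option 'I_n)) :=
  if k is Some k' then (if k' is Some i then g i else h) else f.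
have v_L2 k : weighted_L2 mu rho (v k).
  by case: k => [[i|]|]; split => //; [exact: g_meas | exact: g_L2].
pose M k l := wip mu rho (v k) (v l).
have M_sym : is_sym M by move=> k l; exact: wipC.
have M_psd : is_psd M by exact: wip_gram_psd.
pose B := schur M (Some None).
have B_sym : is_sym B by exact: schur_sym.
have B_psd : is_psd B by exact: schur_psd.
pose gB (i : 'I_n) : option (option 'I_n) := Some (Some i).
have colK i :
    \sum_j `|B (gB j) (gB i)| <= diag_offdiag_bound (fun i j => B (gB i) (gB j)).
  by apply: col_sum_le_diag_offdiag_bound; exact: psd_diag_ge0.
exact: (sum_sqr_le_of_col_sum None B_sym B_psd (diag_offdiag_bound_ge0 _) colK).
Qed.
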